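(* Let $\mathcal{A},\mathcal{D}$ be categories and let $(\mathcal{E},\mathcal{M})$ be any orthogonal factorization system on $[\mathcal{A},\mathcal{D}]$. If all natural transformations in $\mathcal{M}$ are cartesian, then $(\mathcal{E},\mathcal{M})$ restricts to an orthogonal factorization system on $\mathrm{CartNt}[\mathcal{A},\mathcal{D}]$, the category of all functors $\mathcal{A}\to\mathcal{D}$ and cartesian natural transformations.
   Context: A natural transformation is cartesian if all its naturality squares are pullbacks. An orthogonal factorization system $(\mathcal{E},\mathcal{M})$: both classes contain all isomorphisms and are closed under composition; each commuting square $g\circ e = m\circ f$ with $e\in\mathcal{E}$, $m\in\mathcal{M}$ has a unique diagonal $d$ with $d\circ e=f$, $m\circ d = g$; every morphism factors as $m\circ e$ with $e\in\mathcal{E}$, $m\in\mathcal{M}$. Restriction means intersecting both classes with the cartesian natural transformations. *)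

From Stdlib Require Import FunctionalExtensionality ProofIrrelevance.
Set Implicit Arguments.
Unset Strict Implicit.

Record Category : Type := {
  Obj :> Type;
  Hom : Obj -> Obj -> Type;
  idm : forall X, Hom X X;
  comp : forall X Y Z, Hom Y Z -> Hom X Y -> Hom X Z;
  comp_assoc : forall X Y Z W (f : Hom X Y) (g : Hom Y Z) (h : Hom Z W),
      comp h (comp g f) = comp (comp h g) f;
  comp_id_l : forall X Y (f : Hom X Y), comp (idm Y) f = f;
  comp_id_r : forall X Y (f : Hom X Y), comp f (idm X) = f
}.

Arguments Hom {c} _ _.
Arguments idm {c} X.
Arguments comp {c X Y Z} _ _.

Record Functor (A D : Category) : Type := {
  fobj :> A -> D;
  fmap : forall X Y, @Hom A X Y -> @Hom D (fobj X) (fobj Y);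
  fmap_id : forall X, fmap (idm X) = idm (fobj X);
  fmap_comp : forall X Y Z (f : @Hom A X Y) (g : @Hom A Y Z),
      fmap (comp g f) = comp (fmap g) (fmap f)
}.
Arguments fmap {A D} f {X Y} _ : rename.

Record NatTrans (A D : Category) (F G : Functor A D) : Type := {
  comp_at :> forall X : A, @Hom D (F X) (G X);
  naturality : forall X Y (f : @Hom A X Y),
      comp (fmap G f) (comp_at X) = comp (comp_at Y) (fmap F f)
}.

Lemma NatTrans_eq (A D : Category) (F G : Functor A D) (a b : NatTrans F G) :
  (forall X, a X = b X) -> a = b.
Proof.
  destruct a as [a na], b as [b nb]; simpl; intros H.
  assert (a = b) by (apply FunctionalExtensionality.functional_extensionality_dep; exact H).
  subst b. f_equal. apply ProofIrrelevance.proof_irrelevance.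
Qed.

Definition nt_id (A D : Category) (F : Functor A D) : NatTrans F F.
Proof.
  refine {| comp_at := fun X => idm (F X) |}.
  intros X Y f. rewrite comp_id_l, comp_id_r. reflexivity.
Defined.

Definition nt_comp (A D : Category) (F G H : Functor A D)
  (b : NatTrans G H) (a : NatTrans F G) : NatTrans F H.
Proof.
  refine {| comp_at := fun X => comp (b X) (a X) |}.
  intros X Y f.
  rewrite comp_assoc, naturality, <- comp_assoc, naturality, comp_assoc.
  reflexivity.
Defined.

Definition FunctorCat (A D : Category) : Category.
Proof.
  refine {| Obj := Functor A D; Hom := @NatTrans A D;
            idm := @nt_id A D; comp := @nt_comp A D |}.
  - intros; apply NatTrans_eq; intros; simpl; apply comp_assoc.
  - intros; apply NatTrans_eq; intros; simpl; apply comp_id_l.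
  - intros; apply NatTrans_eq; intros; simpl; apply comp_id_r.
Defined.

Definition IsPullback (C : Category) (P X Y Z : C)
  (p1 : Hom P X) (p2 : Hom P Y) (f : Hom X Z) (g : Hom Y Z) : Prop :=
  comp f p1 = comp g p2 /\
  forall (Q : C) (q1 : Hom Q X) (q2 : Hom Q Y),
    comp f q1 = comp g q2 ->
    exists! u : Hom Q P, comp p1 u = q1 /\ comp p2 u = q2.

Definition cartesian (A D : Category) (F G : Functor A D) (a : NatTrans F G) : Prop :=
  forall (X Y : A) (f : Hom X Y),
    IsPullback (a X) (fmap F f) (fmap G f) (a Y).

Definition MorClass (C : Category) := forall X Y : C, @Hom C X Y -> Prop.

(* Orthogonal factorization system on the wide subcategory of C whose morphisms
   are those satisfying W (W is assumed to be a wide subcategory; all notions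
   — isomorphisms, squares, diagonals, factorizations — are taken inside it). *)
Definition IsOFS_in (C : Category) (W E M : MorClass C) : Prop :=
  (forall X Y (f : Hom X Y), E X Y f -> W X Y f) /\
  (forall X Y (f : Hom X Y), M X Y f -> W X Y f) /\
  (forall X Y (f : Hom X Y) (g : Hom Y X), W X Y f -> W Y X g ->
       comp g f = idm X -> comp f g = idm Y -> E X Y f /\ M X Y f) /\
  (forall X Y Z (f : Hom X Y) (g : Hom Y Z),
       E X Y f -> E Y Z g -> E X Z (comp g f)) /\
  (forall X Y Z (f : Hom X Y) (g : Hom Y Z),
       M X Y f -> M Y Z g -> M X Z (comp g f)) /\
  (forall (A B X Y : C) (e : Hom A B) (m : Hom X Y) (f : Hom A X) (g : Hom B Y),
       E A B e -> M X Y m -> W A X f -> W B Y g ->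
       comp g e = comp m f ->
       exists d : Hom B X, W B X d /\ comp d e = f /\ comp m d = g /\
         forall d' : Hom B X, W B X d' -> comp d' e = f -> comp m d' = g -> d' = d) /\
  (forall X Y (f : Hom X Y), W X Y f ->
       exists (Z : C) (e : Hom X Z) (m : Hom Z Y),
         E X Z e /\ M Z Y m /\ f = comp m e).

Definition IsOFS (C : Category) (E M : MorClass C) : Prop :=
  IsOFS_in (fun _ _ _ => True) E M.

Definition CartNt (A D : Category) : MorClass (FunctorCat A D) :=
  fun F G a => @cartesian A D F G a.

(* Pasting pullback squares shows that cartesian transformations are closed
   under composition and left cancellable: if [m] and [m o d] are cartesian,
   so is [d].  An orthogonal factorization system whose right class lies in a
   wide subcategory with these two properties restricts to that subcategory:
   the diagonal [d] of a square [g o e = m o f] with [g] in the subcategory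
   satisfies [m o d = g], and the left part [e] of a factorization [f = m o e]
   of a map [f] in the subcategory is in it, both by cancellation. *)
Set Implicit Arguments.

Section Pullbacks.
Variable C : Category.

Lemma pullback_mediator_unique {P X Y Z Q : C} {p1 : Hom P X} {p2 : Hom P Y}
    {f : Hom X Z} {g : Hom Y Z} {u u' : Hom Q P} :
  IsPullback p1 p2 f g -> comp p1 u = comp p1 u' -> comp p2 u = comp p2 u' ->
  u = u'.
Proof.
  intros [Hsq Huniv] H1 H2.
  assert (Hcone : comp f (comp p1 u) = comp g (comp p2 u)).
  { rewrite !comp_assoc, Hsq. reflexivity. }
  destruct (Huniv Q _ _ Hcone) as [w [_ Hw]].
  transitivity w; [symmetry|]; apply Hw; auto.
Qed.

Section Pasting.
Context {P X Y Z X' Z' : C}.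
Context {p1 : Hom P X} {p2 : Hom P Y} {f : Hom X Z} {g : Hom Y Z}.
Context {q : Hom X X'} {h : Hom X' Z'} {k : Hom Z Z'}.
Hypothesis right_pullback : IsPullback q f h k.

Lemma pullback_paste :
  IsPullback p1 p2 f g -> IsPullback (comp q p1) p2 h (comp k g).
Proof.
  intros left_pullback.
  pose proof left_pullback as [Hsq Huniv].
  pose proof right_pullback as [Hsq' Huniv'].
  split.
  { rewrite comp_assoc, Hsq', <- !comp_assoc, Hsq. reflexivity. }
  intros Q r1 r2 Hr.
  rewrite <- comp_assoc in Hr.
  destruct (Huniv' Q r1 (comp g r2) Hr) as [v [[Hv1 Hv2] _]].
  destruct (Huniv Q v r2 Hv2) as [u [[Hu1 Hu2] _]].
  exists u. split.
  - split; [rewrite <- comp_assoc, Hu1|]; assumption.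
  - intros u' [Hu'1 Hu'2].
    apply (pullback_mediator_unique left_pullback); [|congruence].
    apply (pullback_mediator_unique right_pullback).
    + rewrite !comp_assoc, Hu'1, <- comp_assoc, Hu1. exact Hv1.
    + rewrite !comp_assoc, Hsq, <- !comp_assoc, Hu'2, Hu2. reflexivity.
Qed.

Lemma pullback_cancel :
  comp f p1 = comp g p2 -> IsPullback (comp q p1) p2 h (comp k g) ->
  IsPullback p1 p2 f g.
Proof.
  intros Hsq Houter.
  pose proof right_pullback as [Hsq' _].
  split; [exact Hsq|].
  intros Q r1 r2 Hr.
  assert (Hcone : comp h (comp q r1) = comp (comp k g) r2).
  { rewrite comp_assoc, Hsq', <- !comp_assoc, Hr. reflexivity. }
  destruct (proj2 Houter Q _ _ Hcone) as [u [[Hu1 Hu2] Huniq]].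
  assert (Hp1u : comp p1 u = r1).
  { apply (pullback_mediator_unique right_pullback).
    - rewrite comp_assoc. exact Hu1.
    - rewrite comp_assoc, Hsq, <- comp_assoc, Hu2. exact (eq_sym Hr). }
  exists u. split; [split; assumption|].
  intros u' [Hu'1 Hu'2]. apply Huniq.
  split; [rewrite <- comp_assoc, Hu'1|]; [reflexivity|exact Hu'2].
Qed.

End Pasting.
End Pullbacks.

Section Cartesian.
Variables (A D : Category) (F G H : Functor A D).
Variables (a : NatTrans F G) (b : NatTrans G H).

Lemma cartesian_comp : cartesian a -> cartesian b -> cartesian (nt_comp b a).
Proof.
  intros Ha Hb X Y f. exact (pullback_paste (Hb X Y f) (Ha X Y f)).
Qed.

Lemma cartesian_cancel : cartesian b -> cartesian (nt_comp b a) -> cartesian a.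
Proof.
  intros Hb Hba X Y f.
  exact (pullback_cancel (Hb X Y f) (naturality a f) (Hba X Y f)).
Qed.

End Cartesian.

Section RestrictOFS.
Variables (C : Category) (W E M : MorClass C).
Hypothesis W_comp : forall {X Y Z} {f : Hom X Y} {g : Hom Y Z},
  W X Y f -> W Y Z g -> W X Z (comp g f).
Hypothesis W_cancel : forall {X Y Z} {f : Hom X Y} {g : Hom Y Z},
  W Y Z g -> W X Z (comp g f) -> W X Y f.
Hypothesis M_sub_W : forall {X Y} {f : Hom X Y}, M X Y f -> W X Y f.

Lemma IsOFS_restrict :
  IsOFS E M ->
  IsOFS_in W (fun X Y f => E X Y f /\ W X Y f) (fun X Y f => M X Y f /\ W X Y f).
Proof.
  intros [_ [_ [Hiso [HcompE [HcompM [Hdiag Hfact]]]]]].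
  split; [tauto|]. split; [tauto|].
  split.
  { intros X Y f g Wf Wg Hgf Hfg.
    destruct (Hiso X Y f g I I Hgf Hfg). tauto. }
  split.
  { intros X Y Z f g [Ef Wf] [Eg Wg]. auto. }
  split.
  { intros X Y Z f g [Mf Wf] [Mg Wg]. auto. }
  split.
  { intros S T X Y e m f g [Ee _] [Mm Wm] _ Wg Hsq.
    destruct (Hdiag S T X Y e m f g Ee Mm I I Hsq) as [d [_ [Hde [Hmd Huniq]]]].
    exists d. split; [apply (W_cancel Wm); rewrite Hmd; exact Wg|].
    split; [exact Hde|]. split; [exact Hmd|].
    intros d' _ Hd'e Hmd'. auto. }
  intros X Y f Wf.
  destruct (Hfact X Y f I) as [Z [e [m [Ee [Mm Hf]]]]].
  exists Z, e, m. subst f.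
  pose proof (M_sub_W Mm) as Wm.
  repeat split; auto. exact (W_cancel Wm Wf).
Qed.

End RestrictOFS.

Theorem lemma4p8 (A D : Category) (E M : MorClass (FunctorCat A D)) :
  IsOFS E M ->
  (forall (F G : FunctorCat A D) (a : Hom F G), M F G a -> CartNt a) ->
  IsOFS_in (CartNt (A:=A) (D:=D))
    (fun F G a => E F G a /\ CartNt a)
    (fun F G a => M F G a /\ CartNt a).
Proof.
  intros HOFS HMcart.
  apply IsOFS_restrict; [| |exact HMcart|exact HOFS].
  - exact (@cartesian_comp A D).
  - exact (@cartesian_cancel A D).
Qed.
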